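(* For every nonnegative integer $r$, $$\sum_{n=1}^{\infty}\frac{1}{(n+1)(2n+3)(2n+2r+3)}\frac{\binom{2n}{n}}{\binom{2n+2r+2}{n+r+1}}=\frac{1}{2(2r+1)\binom{2r}{r}}-\frac{1}{3(2r+3)\binom{2r+2}{r+1}}-\frac{1}{2^{2r+1}}\left(\frac{1}{4(r+1)}+\frac{\binom{2r}{r}}{2\cdot 4^{r+1}}\left(\frac{\pi^2}{2}+\sum_{k=1}^r\frac{4^k}{k^2\binom{2k}{k}}\right)\right).$$ *)

From Stdlib Require Import Reals.
From Coquelicot Require Import Coquelicot.
Open Scope R_scope.

Definition binomR (m k : nat) : R := Binomial.C m k.

Fixpoint sum1 (f : nat -> R) (r : nat) : R :=
  match r with O => 0 | S r' => sum1 f r' + f r end.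

Definition term5 (r n : nat) : R :=
  1 / ((INR n + 1) * (2 * INR n + 3) * (2 * INR n + 2 * INR r + 3))
  * (binomR (2 * n) n / binomR (2 * n + 2 * r + 2) (n + r + 1)).

Definition rhs5 (r : nat) : R :=
  1 / (2 * (2 * INR r + 1) * binomR (2 * r) r)
  - 1 / (3 * (2 * INR r + 3) * binomR (2 * r + 2) (r + 1))
  - 1 / 2 ^ (2 * r + 1) *
    (1 / (4 * (INR r + 1))
     + binomR (2 * r) r / (2 * 4 ^ (r + 1)) *
       (PI ^ 2 / 2 + sum1 (fun k => 4 ^ k / (INR k ^ 2 * binomR (2 * k) k)) r)).

From Stdlib Require Import Reals Lra Lia.
From Coquelicot Require Import Coquelicot.
Open Scope R_scope.

(* Write the summand as [C(2n,n) / C(2n+2r+2, n+r+1)] times a rational function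
   of [n] and [r].  Passing from [r] to [r+1] multiplies the summand by
   [(2r+1)/(8(r+1))] up to a difference [G_r(n) - G_r(n+1)] of a hypergeometric
   term (Gosper's certificate), so the sums satisfy the first-order recurrence
   [S(r+1) = (2r+1)/(8(r+1)) S(r) + G_r(1) - lim G_r], which the right-hand side
   satisfies as well.  For [r = 0] the summand is [-1/(4(2n+3)^2)] plus a
   telescoping term, so everything reduces to [sum 1/(2k+1)^2 = pi^2/8], i.e. to
   [zeta(2) = pi^2/6].  The latter is proved by Matsuoka's method: for
   [W_k = int_0^(pi/2) cos^k] and [J_k = int_0^(pi/2) x^2 cos^k], integration by
   parts gives [J_(k+2)/W_(k+2) = J_k/W_k - 2/(k+2)^2], while [x cos x <= sin x]
   gives [0 <= J_(k+2)/W_(k+2) <= 1/(k+1)], and [J_0/W_0 = pi^2/12]. *)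

Lemma ex_RInt_smooth (f : R -> R) (a b : R) :
  (forall x, ex_derive f x) -> ex_RInt f a b.
Proof.
intros Df. apply (@ex_RInt_continuous R_CompleteNormedModule); intros x _.
now apply (@ex_derive_continuous R_AbsRing R_NormedModule).
Qed.

(* [:> R]: an [RInt] equation otherwise lives in the carrier of a normed
   module, where [ring] and [field] do not apply. *)
Lemma RInt_derive_eq (F f : R -> R) (a b : R) :
  (forall x, is_derive F x (f x)) -> (forall x, ex_derive f x) ->
  RInt f a b = F b - F a :> R.
Proof.
intros DF Df. apply is_RInt_unique.
apply (@is_RInt_derive R_CompleteNormedModule); intros x _; [apply DF|].
now apply (@ex_derive_continuous R_AbsRing R_NormedModule).
Qed.

Lemma RInt_lincomb (f g : R -> R) (a b p q : R) :
  ex_RInt f a b -> ex_RInt g a b ->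
  RInt (fun x => p * f x + q * g x) a b = p * RInt f a b + q * RInt g a b.
Proof.
intros If Ig. apply is_RInt_unique.
apply (@is_RInt_plus R_NormedModule); apply (@is_RInt_scal R_NormedModule);
  now apply (@RInt_correct R_CompleteNormedModule).
Qed.

Lemma is_lim_seq_affine_ratio (p q s t : R) : 0 < s -> 0 < t ->
  is_lim_seq (fun n => (p * INR n + q) / (s * INR n + t)) (p / s).
Proof.
intros Hs Ht.
assert (Hinv : is_lim_seq (fun n => / (s * INR n + t)) 0).
{ replace (Finite 0) with (Rbar_inv p_infty) by reflexivity.
  apply is_lim_seq_inv; [|discriminate].
  eapply is_lim_seq_plus; [eapply is_lim_seq_mult | apply is_lim_seq_const |].
  - apply is_lim_seq_const.
  - apply is_lim_seq_INR.
  - apply is_Rbar_mult_sym, is_Rbar_mult_p_infty_pos; exact Hs.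
  - reflexivity. }
apply is_lim_seq_ext with (fun n => p / s + (q - p * t / s) * / (s * INR n + t)).
- intros n; assert (0 <= s * INR n) by (apply Rmult_le_pos; [lra | apply pos_INR]).
  field; lra.
- replace (Finite (p / s)) with (Finite (p / s + (q - p * t / s) * 0)) by (f_equal; ring).
  apply is_lim_seq_plus'; [apply is_lim_seq_const|].
  apply is_lim_seq_mult'; [apply is_lim_seq_const | exact Hinv].
Qed.

Lemma is_series_sum_f_R0 (a : nat -> R) (l : R) :
  is_series a l <-> is_lim_seq (sum_f_R0 a) l.
Proof.
assert (E : forall N, sum_n a N = sum_f_R0 a N) by apply sum_n_Reals.
split; intros H.
- exact (is_lim_seq_ext _ _ l E H).
- exact (is_lim_seq_ext _ _ l (fun N => eq_sym (E N)) H).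
Qed.

Lemma sum_f_R0_even_odd (f : nat -> R) (N : nat) :
  sum_f_R0 f (S (2 * N))
  = sum_f_R0 (fun k => f (2 * k)%nat) N + sum_f_R0 (fun k => f (S (2 * k))) N.
Proof.
induction N as [|N IH]; [reflexivity|].
replace (S (2 * S N)) with (S (S (S (2 * N)))) by lia.
rewrite (tech5 f (S (S (2 * N)))), (tech5 f (S (2 * N))), IH, !tech5.
replace (2 * S N)%nat with (S (S (2 * N))) by lia; ring.
Qed.

Lemma is_series_telescope (G : nat -> R) (L : R) :
  is_lim_seq G L -> is_series (fun n => G n - G (S n)) (G 0%nat - L).
Proof.
intros HG; apply is_series_sum_f_R0, is_lim_seq_ext with (fun N => G 0%nat - G (S N)).
- intros N; induction N as [|N IH]; [reflexivity|]. rewrite tech5, <- IH; ring.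
- apply is_lim_seq_minus'; [apply is_lim_seq_const | now apply is_lim_seq_incr_1 in HG].
Qed.

Lemma is_series_telescoping_step (a b G : nat -> R) (c l L : R) :
  is_series a l -> is_lim_seq G L ->
  (forall n, b n = c * a n + (G n - G (S n))) ->
  is_series b (c * l + (G 0%nat - L)).
Proof.
intros Ha HG Hb; apply (is_series_ext _ _ _ (fun n => eq_sym (Hb n))).
exact (is_series_plus _ _ _ _ (is_series_scal c _ _ Ha) (is_series_telescope G L HG)).
Qed.

(** * Wallis integrals and [zeta(2)] *)

Lemma PI2_pos : 0 < PI / 2.
Proof. pose proof PI_RGT_0; lra. Qed.

Lemma cos_PI2_pow (k : nat) : cos (PI / 2) ^ S k = 0.
Proof. rewrite cos_PI2; apply pow_i; lia. Qed.

Lemma eq_by_pythagoras (x c a b : R) :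
  a - b = c * (sin x ^ 2 + cos x ^ 2 - 1) -> a = b.
Proof.
assert (P := sin2_cos2 x); unfold Rsqr in P. intros E. rewrite <- P in E. lra.
Qed.

(* Derivatives are written in the shape [p * f x + q * g x] of [RInt_lincomb];
   [auto_derive] leaves [INR (S k)] unfolded into a [match]. *)
Lemma is_derive_sin_cos_pow (k : nat) (x : R) :
  is_derive (fun x => sin x * cos x ^ S k) x
    (INR (S (S k)) * cos x ^ S (S k) + - INR (S k) * cos x ^ k).
Proof.
auto_derive; [easy|].
change (match k with 0%nat => 1 | S _ => INR k + 1 end) with (INR (S k)).
apply (eq_by_pythagoras x (- INR (S k) * cos x ^ k)).
rewrite <- !tech_pow_Rmult, !S_INR; ring.
Qed.

(* The coefficient [(k+2)/2] makes the [x sin x cos^(k+1) x] terms cancel. *)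
Lemma is_derive_x_cos_pow (k : nat) (x : R) :
  is_derive
    (fun x => x * cos x ^ S (S k) + INR (S (S k)) / 2 * (x ^ 2 * (sin x * cos x ^ S k))) x
    (1 * cos x ^ S (S k) + INR (S (S k)) / 2 *
       (INR (S (S k)) * (x ^ 2 * cos x ^ S (S k)) + - INR (S k) * (x ^ 2 * cos x ^ k))).
Proof.
auto_derive; [easy|].
change (match k with 0%nat => 1 | S _ => INR k + 1 end) with (INR (S k)).
apply (eq_by_pythagoras x (- INR (S (S k)) / 2 * INR (S k) * x ^ 2 * cos x ^ k)).
rewrite <- !tech_pow_Rmult, !S_INR; simpl INR; field.
Qed.

(* [sin x - x cos x] is the integral of [t sin t] over [0, x]. *)
Lemma x_cos_le_sin (x : R) : 0 <= x <= PI / 2 -> x * cos x <= sin x.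
Proof.
intros Hx.
assert (E : RInt (fun t => t * sin t) 0 x = sin x - x * cos x :> R).
{ rewrite (RInt_derive_eq (fun t => sin t - t * cos t)), sin_0.
  - ring.
  - intros t; auto_derive; [easy | ring].
  - intros t; auto_derive; easy. }
assert (P : 0 <= RInt (fun t => t * sin t) 0 x).
{ apply RInt_ge_0; [lra | apply ex_RInt_smooth; intros t; auto_derive; easy |].
  intros t Ht; apply Rmult_le_pos; [lra | apply sin_ge_0; pose proof PI_RGT_0; lra]. }
lra.
Qed.

Definition wallis (k : nat) : R := RInt (fun x => cos x ^ k) 0 (PI / 2).
Definition wallis_sq (k : nat) : R := RInt (fun x => x ^ 2 * cos x ^ k) 0 (PI / 2).

Lemma ex_RInt_cos_pow (k : nat) (a b : R) : ex_RInt (fun x => cos x ^ k) a b.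
Proof. apply ex_RInt_smooth; intros x; auto_derive; easy. Qed.

Lemma ex_RInt_sq_cos_pow (k : nat) (a b : R) : ex_RInt (fun x => x ^ 2 * cos x ^ k) a b.
Proof. apply ex_RInt_smooth; intros x; auto_derive; easy. Qed.

Lemma wallis_0 : wallis 0 = PI / 2.
Proof.
unfold wallis; rewrite (RInt_derive_eq (fun x => x)); [ring| |].
- intros x; auto_derive; easy.
- intros x; auto_derive; easy.
Qed.

Lemma wallis_sq_0 : wallis_sq 0 = PI ^ 3 / 24.
Proof.
unfold wallis_sq; rewrite (RInt_derive_eq (fun x => x ^ 3 / 3)); [field| |].
- intros x; auto_derive; [easy|field].
- intros x; auto_derive; easy.
Qed.

Lemma wallis_SS (k : nat) : INR (S (S k)) * wallis (S (S k)) = INR (S k) * wallis k.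
Proof.
assert (E : RInt (fun x => INR (S (S k)) * cos x ^ S (S k) + - INR (S k) * cos x ^ k)
              0 (PI / 2) = 0 :> R).
{ rewrite (RInt_derive_eq _ _ _ _ (is_derive_sin_cos_pow k)), cos_PI2_pow, sin_0; [ring|].
  intros x; auto_derive; easy. }
rewrite RInt_lincomb in E; try apply ex_RInt_cos_pow.
unfold wallis; lra.
Qed.

Lemma wallis_sq_SS (k : nat) :
  wallis (S (S k)) + INR (S (S k)) ^ 2 / 2 * wallis_sq (S (S k))
  = INR (S (S k)) * INR (S k) / 2 * wallis_sq k.
Proof.
assert (E : RInt (fun x => 1 * cos x ^ S (S k) + INR (S (S k)) / 2 *
              (INR (S (S k)) * (x ^ 2 * cos x ^ S (S k)) + - INR (S k) * (x ^ 2 * cos x ^ k)))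
              0 (PI / 2) = 0 :> R).
{ rewrite (RInt_derive_eq _ _ _ _ (is_derive_x_cos_pow k)), !cos_PI2_pow; [ring|].
  intros x; auto_derive; easy. }
rewrite RInt_lincomb, (RInt_lincomb (fun x => x ^ 2 * cos x ^ S (S k))) in E.
- unfold wallis, wallis_sq; lra.
- apply ex_RInt_sq_cos_pow.
- apply ex_RInt_sq_cos_pow.
- apply ex_RInt_cos_pow.
- apply ex_RInt_smooth; intros x; auto_derive; easy.
Qed.

Lemma wallis_pos (k : nat) : 0 < wallis k.
Proof.
apply RInt_gt_0; [apply PI2_pos| |].
- intros x Hx; apply pow_lt, cos_gt_0; lra.
- intros x _; apply (@ex_derive_continuous R_AbsRing R_NormedModule); auto_derive; easy.
Qed.

Lemma wallis_sq_ge0 (k : nat) : 0 <= wallis_sq k.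
Proof.
pose proof PI2_pos.
apply RInt_ge_0; [lra | apply ex_RInt_sq_cos_pow|].
intros x Hx; apply Rmult_le_pos; [apply pow2_ge_0 | apply pow_le, cos_ge_0; lra].
Qed.

Lemma wallis_sq_SS_le (k : nat) : wallis_sq (S (S k)) <= wallis k - wallis (S (S k)).
Proof.
pose proof PI2_pos.
assert (E : RInt (fun x => 1 * cos x ^ k + -1 * cos x ^ S (S k)) 0 (PI / 2)
            = wallis k - wallis (S (S k)) :> R).
{ rewrite RInt_lincomb by apply ex_RInt_cos_pow; unfold wallis; ring. }
rewrite <- E.
apply RInt_le; [lra | apply ex_RInt_sq_cos_pow | apply ex_RInt_smooth; intros x; auto_derive; easy |].
intros x Hx.
assert (Hc : 0 <= cos x) by (apply cos_ge_0; lra).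
assert (Hck : 0 <= cos x ^ k) by (apply pow_le; lra).
assert (Hxs : x * cos x <= sin x) by (apply x_cos_le_sin; lra).
assert (Hxc : 0 <= x * cos x) by (apply Rmult_le_pos; lra).
assert (P := sin2_cos2 x); unfold Rsqr in P.
assert (Hsq : (x * cos x) ^ 2 <= 1 - cos x ^ 2) by nra.
assert (Hmul := Rmult_le_compat_r _ _ _ Hck Hsq).
rewrite <- !tech_pow_Rmult; lra.
Qed.

Definition wallis_moment (k : nat) : R := wallis_sq k / wallis k.

Lemma wallis_moment_0 : wallis_moment 0 = PI ^ 2 / 12.
Proof.
unfold wallis_moment; rewrite wallis_0, wallis_sq_0; pose proof PI_RGT_0; field; lra.
Qed.

Lemma wallis_moment_SS (k : nat) :
  wallis_moment (S (S k)) = wallis_moment k - 2 / INR (S (S k)) ^ 2.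
Proof.
assert (Hk1 : 0 < INR (S k)) by apply lt_0_INR, Nat.lt_0_succ.
assert (Hk2 : 0 < INR (S (S k))) by apply lt_0_INR, Nat.lt_0_succ.
pose proof (wallis_pos k) as Wpos.
assert (EW : wallis (S (S k)) = INR (S k) / INR (S (S k)) * wallis k).
{ apply (Rmult_eq_reg_l (INR (S (S k)))); [rewrite wallis_SS; field|]; lra. }
assert (EJ : wallis_sq (S (S k))
             = (INR (S (S k)) * INR (S k) / 2 * wallis_sq k - wallis (S (S k)))
               / (INR (S (S k)) ^ 2 / 2)).
{ assert (Hsq : 0 < INR (S (S k)) ^ 2 / 2) by (apply Rdiv_lt_0_compat; [apply pow_lt|]; lra).
  apply (Rmult_eq_reg_l (INR (S (S k)) ^ 2 / 2)); [rewrite <- wallis_sq_SS; field|]; lra. }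
unfold wallis_moment; rewrite EJ, EW; field; lra.
Qed.

Lemma wallis_moment_SS_bounds (k : nat) :
  0 <= wallis_moment (S (S k)) <= / INR (S k).
Proof.
assert (Hk1 : 0 < INR (S k)) by apply lt_0_INR, Nat.lt_0_succ.
pose proof (wallis_pos (S (S k))) as Wpos.
assert (EW : wallis k = INR (S (S k)) / INR (S k) * wallis (S (S k))).
{ apply (Rmult_eq_reg_l (INR (S k))); [rewrite <- wallis_SS; field|]; lra. }
assert (Jle : wallis_sq (S (S k)) <= wallis (S (S k)) / INR (S k)).
{ replace (wallis (S (S k)) / INR (S k)) with (wallis k - wallis (S (S k)))
    by (rewrite EW, (S_INR (S k)); field; lra).
  apply wallis_sq_SS_le. }
unfold wallis_moment; split.
- apply Rdiv_le_0_compat; [apply wallis_sq_ge0 | lra].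
- replace (/ INR (S k)) with (wallis (S (S k)) / INR (S k) / wallis (S (S k))) by (field; lra).
  apply Rmult_le_compat_r; [apply Rlt_le, Rinv_0_lt_compat; lra | exact Jle].
Qed.

Lemma is_lim_wallis_moment_even : is_lim_seq (fun N => wallis_moment (2 * S N)) 0.
Proof.
apply is_lim_seq_le_le with (fun _ => 0) (fun N => (0 * INR N + 1) / (2 * INR N + 1)).
- intros N; replace (2 * S N)%nat with (S (S (2 * N))) by lia.
  replace ((0 * INR N + 1) / (2 * INR N + 1)) with (/ INR (S (2 * N)))
    by (rewrite S_INR, mult_INR; simpl; field; pose proof (pos_INR N); lra).
  apply wallis_moment_SS_bounds.
- apply is_lim_seq_const.
- replace (Finite 0) with (Finite (0 / 2)) by (f_equal; field).
  apply is_lim_seq_affine_ratio; lra.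
Qed.

Lemma sum_inv_sq_wallis_moment (N : nat) :
  sum_f_R0 (fun j => / (INR j + 1) ^ 2) N = 2 * (wallis_moment 0 - wallis_moment (2 * S N)).
Proof.
induction N as [|N IH].
- change (2 * 1)%nat with 2%nat; rewrite (wallis_moment_SS 0); simpl; field.
- rewrite tech5, IH; replace (2 * S (S N))%nat with (S (S (2 * S N))) by lia.
  rewrite wallis_moment_SS, !S_INR, mult_INR, !S_INR; simpl.
  pose proof (pos_INR N); field; lra.
Qed.

Lemma basel : is_series (fun j => / (INR j + 1) ^ 2) (PI ^ 2 / 6).
Proof.
apply is_series_sum_f_R0, is_lim_seq_ext with
  (fun N => 2 * (wallis_moment 0 - wallis_moment (2 * S N))).
- intros N; symmetry; apply sum_inv_sq_wallis_moment.
- replace (PI ^ 2 / 6) with (2 * (wallis_moment 0 - 0)) by (rewrite wallis_moment_0; field).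
  apply is_lim_seq_mult'; [apply is_lim_seq_const|].
  apply is_lim_seq_minus'; [apply is_lim_seq_const | apply is_lim_wallis_moment_even].
Qed.

Lemma basel_odd : is_series (fun k => / (2 * INR k + 1) ^ 2) (PI ^ 2 / 8).
Proof.
set (f := fun j => / (INR j + 1) ^ 2).
apply is_series_sum_f_R0, is_lim_seq_ext with
  (fun N => sum_f_R0 f (S (2 * N)) - / 4 * sum_f_R0 f N).
- intros N; rewrite sum_f_R0_even_odd.
  rewrite (sum_eq (fun k => f (S (2 * k))) (fun k => f k * / 4)), <- scal_sum.
  + rewrite (sum_eq (fun k => f (2 * k)%nat) (fun k => / (2 * INR k + 1) ^ 2)); [ring|].
    intros k _; unfold f; rewrite mult_INR; reflexivity.
  + intros k _; unfold f; rewrite S_INR, mult_INR; simpl.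
    pose proof (pos_INR k); field; lra.
- assert (B := proj1 (is_series_sum_f_R0 _ _) basel).
  replace (PI ^ 2 / 8) with (PI ^ 2 / 6 - / 4 * (PI ^ 2 / 6)) by field.
  apply is_lim_seq_minus'.
  + apply (is_lim_seq_subseq (sum_f_R0 f) _ (fun N => S (2 * N))); [|exact B].
    apply eventually_subseq; intros N; lia.
  + apply is_lim_seq_mult'; [apply is_lim_seq_const | exact B].
Qed.

Lemma basel_odd_tail : is_series (fun m => / (2 * INR m + 5) ^ 2) (PI ^ 2 / 8 - 1 - / 9).
Proof.
set (a := fun k => / (2 * INR k + 1) ^ 2).
apply (is_series_ext (fun k => a (2 + k)%nat)).
{ intros k; unfold a; rewrite plus_INR; simpl; f_equal; ring. }
apply is_series_incr_n; [lia|].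
match goal with |- is_series _ ?v => replace v with (PI ^ 2 / 8) end; [exact basel_odd|].
rewrite sum_n_Reals; unfold a, plus; simpl; field.
Qed.

(** * Ratios of central binomial coefficients *)

Lemma pow4_pos (r : nat) : 0 < 4 ^ r.
Proof. apply pow_lt; lra. Qed.

Definition central_binom (m : nat) : R := binomR (2 * m) m.

Lemma central_binom_0 : central_binom 0 = 1.
Proof. unfold central_binom, binomR, Binomial.C; simpl; field. Qed.

Lemma central_binom_pos (m : nat) : 0 < central_binom m.
Proof.
unfold central_binom, binomR, Binomial.C.
apply Rdiv_lt_0_compat; [|apply Rmult_lt_0_compat]; apply INR_fact_lt_0.
Qed.

Lemma central_binom_S (m : nat) :
  central_binom (S m) = 2 * (2 * INR m + 1) / (INR m + 1) * central_binom m.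
Proof.
unfold central_binom, binomR, Binomial.C.
replace (2 * S m)%nat with (S (S (2 * m))) by lia.
replace (S (S (2 * m)) - S m)%nat with (S m) by lia.
replace (2 * m - m)%nat with m by lia.
rewrite !fact_simpl, !mult_INR, !S_INR, mult_INR; simpl INR.
pose proof (INR_fact_lt_0 m); pose proof (INR_fact_lt_0 (2 * m)); pose proof (pos_INR m).
field; repeat split; lra.
Qed.

Definition binom_ratio (r n : nat) : R := central_binom n / central_binom (n + r + 1).

Lemma binom_ratio_0 (n : nat) : binom_ratio 0 n = (INR n + 1) / (4 * INR n + 2).
Proof.
unfold binom_ratio; replace (n + 0 + 1)%nat with (S n) by lia; rewrite central_binom_S.
pose proof (central_binom_pos n); pose proof (pos_INR n); field; repeat split; lra.
Qed.

Lemma binom_ratio_Sr (r n : nat) :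
  binom_ratio (S r) n
  = (INR n + INR r + 2) / (2 * (2 * INR n + 2 * INR r + 3)) * binom_ratio r n.
Proof.
unfold binom_ratio; replace (n + S r + 1)%nat with (S (n + r + 1)) by lia.
rewrite central_binom_S, !plus_INR; simpl INR.
pose proof (central_binom_pos n); pose proof (central_binom_pos (n + r + 1)).
pose proof (pos_INR n); pose proof (pos_INR r).
field; repeat split; lra.
Qed.

Lemma binom_ratio_Sn (r n : nat) :
  binom_ratio r (S n)
  = (2 * INR n + 1) * (INR n + INR r + 2) / ((INR n + 1) * (2 * INR n + 2 * INR r + 3))
    * binom_ratio r n.
Proof.
unfold binom_ratio; replace (S n + r + 1)%nat with (S (n + r + 1)) by lia.
rewrite !central_binom_S, !plus_INR; simpl INR.
pose proof (central_binom_pos n); pose proof (central_binom_pos (n + r + 1)).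
pose proof (pos_INR n); pose proof (pos_INR r).
field; repeat split; lra.
Qed.

Lemma is_lim_binom_ratio (r : nat) : is_lim_seq (binom_ratio r) (/ 4 ^ S r).
Proof.
induction r as [|r IH].
- apply (is_lim_seq_ext (fun n => (1 * INR n + 1) / (4 * INR n + 2))).
  { intros n; rewrite binom_ratio_0, Rmult_1_l; reflexivity. }
  replace (/ 4 ^ 1) with (1 / 4) by (simpl; field).
  apply is_lim_seq_affine_ratio; lra.
- pose proof (pos_INR r).
  apply (is_lim_seq_ext
    (fun n => (1 * INR n + (INR r + 2)) / (4 * INR n + (4 * INR r + 6)) * binom_ratio r n)).
  { intros n; rewrite binom_ratio_Sr; pose proof (pos_INR n); field; lra. }
  replace (/ 4 ^ S (S r)) with (1 / 4 * / 4 ^ S r)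
    by (simpl; field; pose proof (pow4_pos r); lra).
  apply is_lim_seq_mult'; [apply is_lim_seq_affine_ratio; lra | exact IH].
Qed.

(** * The recurrence in [r] *)

Lemma term5_binom_ratio (r n : nat) :
  term5 r n
  = 1 / ((INR n + 1) * (2 * INR n + 3) * (2 * INR n + 2 * INR r + 3)) * binom_ratio r n.
Proof.
unfold term5, binom_ratio, central_binom.
replace (2 * n + 2 * r + 2)%nat with (2 * (n + r + 1))%nat by lia; reflexivity.
Qed.

(* Gosper's algorithm applied to [term5 (S r) n - (2r+1)/(8(r+1)) * term5 r n]. *)
Definition gosper_cert (r n : nat) : R :=
  (2 * INR n + INR r + 2) / (4 * (INR r + 1) ^ 2 * (INR r + 2) * (INR n + INR r + 2))
  * binom_ratio (S r) n.

Lemma term5_S (r n : nat) :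
  term5 (S r) n = (2 * INR r + 1) / (8 * (INR r + 1)) * term5 r n
                  + (gosper_cert r n - gosper_cert r (S n)).
Proof.
unfold gosper_cert; rewrite !term5_binom_ratio, binom_ratio_Sn, !binom_ratio_Sr, !S_INR.
pose proof (pos_INR n); pose proof (pos_INR r).
field; repeat split; nra.
Qed.

Lemma is_lim_gosper_cert (r : nat) :
  is_lim_seq (gosper_cert r) (/ (2 * (INR r + 1) ^ 2 * (INR r + 2) * 4 ^ S (S r))).
Proof.
pose proof (pos_INR r).
set (K := 4 * (INR r + 1) ^ 2 * (INR r + 2)).
assert (HK : 0 < K) by (unfold K; apply Rmult_lt_0_compat; [apply Rmult_lt_0_compat|]; nra).
apply (is_lim_seq_ext (fun n => (2 * INR n + (INR r + 2)) / (K * INR n + K * (INR r + 2))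
                                * binom_ratio (S r) n)).
{ intros n; unfold gosper_cert; fold K; pose proof (pos_INR n).
  field; repeat split; nra. }
replace (/ (2 * (INR r + 1) ^ 2 * (INR r + 2) * 4 ^ S (S r))) with (2 / K * / 4 ^ S (S r))
  by (unfold K; simpl; field; split; [pose proof (pow4_pos r); lra | nra]).
apply is_lim_seq_mult'; [apply is_lim_seq_affine_ratio; nra | apply is_lim_binom_ratio].
Qed.

Lemma rhs5_central_binom (r : nat) :
  rhs5 r
  = 1 / (2 * (2 * INR r + 1) * central_binom r)
    - 1 / (3 * (2 * INR r + 3) * central_binom (S r))
    - 1 / (2 * 4 ^ r) * (1 / (4 * (INR r + 1)) + central_binom r / (8 * 4 ^ r) *
        (PI ^ 2 / 2 + sum1 (fun k => 4 ^ k / (INR k ^ 2 * central_binom k)) r)).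
Proof.
unfold rhs5, central_binom.
replace (2 * r + 2)%nat with (2 * S r)%nat by lia; replace (r + 1)%nat with (S r) by lia.
replace (2 * r + 1)%nat with (S (2 * r)) by lia.
rewrite <- (tech_pow_Rmult 2 (2 * r)), pow_mult, <- (tech_pow_Rmult 4 r).
replace (2 ^ 2) with 4 by ring; replace (2 * (4 * 4 ^ r)) with (8 * 4 ^ r) by ring.
reflexivity.
Qed.

Lemma rhs5_S (r : nat) :
  rhs5 (S r) = (2 * INR r + 1) / (8 * (INR r + 1)) * rhs5 r
               + (gosper_cert r 1 - / (2 * (INR r + 1) ^ 2 * (INR r + 2) * 4 ^ S (S r))).
Proof.
rewrite !rhs5_central_binom.
set (f := fun k => 4 ^ k / (INR k ^ 2 * central_binom k)).
change (sum1 f (S r)) with (sum1 f r + f (S r)); set (H := sum1 f r); unfold f.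
unfold gosper_cert, binom_ratio; replace (1 + S r + 1)%nat with (S (S (S r))) by lia.
rewrite !central_binom_S, central_binom_0, !S_INR; change (INR 0) with 0; simpl pow.
pose proof (central_binom_pos r); pose proof (pow4_pos r); pose proof (pos_INR r).
field; repeat split; nra.
Qed.

Lemma is_series_term5_0 : is_series (fun m => term5 0 (m + 1)) (rhs5 0).
Proof.
set (G := fun m => / (8 * (2 * INR m + 3))).
replace (rhs5 0) with (- / 4 * (PI ^ 2 / 8 - 1 - / 9) + (G 0%nat - 0))
  by (unfold rhs5, G, binomR, Binomial.C; simpl; field).
apply (is_series_telescoping_step _ _ G _ _ _ basel_odd_tail).
- apply (is_lim_seq_ext (fun m => (0 * INR m + / 8) / (2 * INR m + 3))).
  { intros m; unfold G; pose proof (pos_INR m); field; lra. }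
  replace (Finite 0) with (Finite (0 / 2)) by (f_equal; field).
  apply is_lim_seq_affine_ratio; lra.
- intros m; unfold G; rewrite term5_binom_ratio, binom_ratio_0, plus_INR, !S_INR.
  change (INR 0) with 0; pose proof (pos_INR m); field; repeat split; lra.
Qed.

Theorem theorem5p0p5 (r : nat) :
  is_series (fun m : nat => term5 r (m + 1)) (rhs5 r).
Proof.
induction r as [|r IH]; [exact is_series_term5_0|].
rewrite rhs5_S.
apply (is_series_telescoping_step _ _ (fun m => gosper_cert r (m + 1)) _ _ _ IH).
- apply (is_lim_seq_incr_n (gosper_cert r) 1), is_lim_gosper_cert.
- intros m; apply term5_S.
Qed.
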